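(* Let $M_i=(E,r_i)$, $1\le i\le m$, be demi-matroids on the same finite ground set $E$ with $r_m(X)\le\cdots\le r_2(X)\le r_1(X)$ for all $X\subseteq E$ (a flag). If $\mathcal{E}_{M_1}\subseteq\mathcal{E}_{M_2}\subseteq\cdots\subseteq\mathcal{E}_{M_m}$, then $(E,\rho)$ with $\rho(X)=\sum_{i=1}^m(-1)^{i+1}r_i(X)$ is a demi-matroid.
   Context: A demi-matroid is a pair $(E,r)$ with $E$ a finite set and $r:2^E\to\mathbb{N}$ satisfying (R1) $r(\emptyset)=0$ and (R2) for every $X\subseteq E$ and $x\in E$, $r(X)\le r(X\cup\{x\})\le r(X)+1$. (Matroids are special demi-matroids.) For a demi-matroid $M=(E,r)$, $\mathcal{E}_M=\{(X,x): X\subseteq E,\ x\in X,\ r(X\setminus\{x\})=r(X)\}$. *)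

From mathcomp Require Import all_boot all_order all_algebra.
Set Implicit Arguments. Unset Strict Implicit. Unset Printing Implicit Defensive.
Import GRing.Theory Num.Theory.

Definition is_demi_matroid (E : finType) (r : {set E} -> nat) : Prop :=
  r set0 = 0%N /\
  (forall (X : {set E}) (x : E), (r X <= r (x |: X))%N /\ (r (x |: X) <= (r X).+1)%N).

Definition calE (E : finType) (r : {set E} -> nat) : {set {set E} * E} :=
  [set p : {set E} * E | (p.2 \in p.1) && (r (p.1 :\ p.2) == r p.1)].

Definition alt_sum (E : finType) (m : nat) (r : nat -> {set E} -> nat)
  (X : {set E}) : int :=
  (\sum_(1 <= i < m.+1) (-1) ^+ i.+1 * (r i X)%:Z)%R.

Definition is_demi_matroid_int (E : finType) (rho : {set E} -> int) : Prop :=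
  (forall X, 0 <= rho X)%R /\ is_demi_matroid (fun X => `|rho X|%N).

(* The alternating sum of a nonincreasing sequence of nonnegative numbers
   a_1 >= a_2 >= ... >= a_m >= 0 lies between 0 and a_1: pairing the terms as
   (a_1 - a_2) + (a_3 - a_4) + ... shows nonnegativity, and pairing them as
   a_1 - (a_2 - a_3) - ... gives the upper bound.  Applied to the ranks r_i(X)
   this gives rho >= 0.  The increments d_i = r_i(X + x) - r_i(X) are 0 or 1,
   and the inclusions E_{M_i} in E_{M_{i+1}} say exactly that d_i = 0 forces
   d_{i+1} = 0, so (d_i) is nonincreasing as well and the increment of rho,
   its alternating sum, lies between 0 and d_1 <= 1. *)
From mathcomp Require Import all_boot all_order all_algebra zify.
Import Order.TTheory GRing.Theory Num.Theory.
Local Open Scope ring_scope.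

Definition altsum {R : pzRingType} (a : nat -> R) (m : nat) : R :=
  \sum_(1 <= i < m.+1) (-1) ^+ i.+1 * a i.

Section AlternatingSums.
Variable R : numDomainType.
Implicit Types (a : nat -> R) (m : nat).

Lemma altsum0 a : altsum a 0 = 0.
Proof. by rewrite /altsum big_geq. Qed.

Lemma altsumSl a m : altsum a m.+1 = a 1%N - altsum (fun i => a i.+1) m.
Proof.
rewrite /altsum big_nat_recl // expr2 mulrNN !mul1r -(@sumrN R).
by congr (_ + _); apply: eq_bigr => i _; rewrite exprS mulN1r mulNr.
Qed.

Lemma altsum_ge0_le_head a m :
  (forall i, (0 < i <= m)%N -> a i.+1 <= a i) -> 0 <= a m.+1 ->
  0 <= altsum a m.+1 <= a 1%N.
Proof.
elim: m a => [|m IHm] a a_noninc a_last_ge0.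
  by rewrite altsumSl altsum0 subr0 lexx andbT.
have /andP[tail_ge0 tail_le] : 0 <= altsum (fun i => a i.+1) m.+1 <= a 2%N.
  by apply: IHm => // i /andP[_ i_le]; apply: a_noninc.
have a2_le_a1 : a 2%N <= a 1%N by apply: a_noninc.
rewrite altsumSl subr_ge0 gerBl tail_ge0 andbT.
exact: le_trans tail_le a2_le_a1.
Qed.

End AlternatingSums.

Lemma mem_calE_setU1 (E : finType) (r : {set E} -> nat) (X : {set E}) x :
  x \notin X -> ((x |: X, x) \in calE r) = (r (x |: X) == r X).
Proof. by move=> xX; rewrite inE /= setU11 setU1K. Qed.

Lemma is_demi_matroid_int_of_incr (E : finType) (rho : {set E} -> int) :
  (forall X, 0 <= rho X) -> rho set0 = 0 ->
  (forall X x, 0 <= rho (x |: X) - rho X <= 1) ->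
  is_demi_matroid_int rho.
Proof.
move=> rho_ge0 rho0 rho_incr; split=> //; split=> [|X x]; first by rewrite rho0.
have := rho_incr X x; have := rho_ge0 X; have := rho_ge0 (x |: X); lia.
Qed.

Section Flag.
Variables (E : finType) (m : nat) (r : nat -> {set E} -> nat).
Hypothesis r_demi : forall i, (1 <= i <= m)%N -> is_demi_matroid (r i).
Hypothesis r_flag : forall i X, (1 <= i < m)%N -> (r i.+1 X <= r i X)%N.
Hypothesis calE_chain :
  forall i, (1 <= i < m)%N -> calE (r i) \subset calE (r i.+1).

Definition rank_incr (X : {set E}) (x : E) (i : nat) : int :=
  (r i (x |: X))%:Z - (r i X)%:Z.

Lemma rank_incr_ge0_le1 X x i :
  (0 < i <= m)%N -> 0 <= rank_incr X x i <= 1.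
Proof. by move=> /r_demi[_ /(_ X x)]; rewrite /rank_incr; lia. Qed.

Lemma rank_incr_nonincr X x i :
  (0 < i < m)%N -> rank_incr X x i.+1 <= rank_incr X x i.
Proof.
move=> i_range.
have /andP[_ next_le1] : 0 <= rank_incr X x i.+1 <= 1.
  by apply: rank_incr_ge0_le1; lia.
have /andP[incr_ge0 incr_le1] : 0 <= rank_incr X x i <= 1.
  by apply: rank_incr_ge0_le1; lia.
have [xX|xNX] := boolP (x \in X).
  by rewrite /rank_incr (setUidPr _) ?sub1set // !subrr.
have [-> //|] : rank_incr X x i = 1 \/ rank_incr X x i = 0 by lia.
rewrite /rank_incr => /eqP; rewrite subr_eq0 eqz_nat -mem_calE_setU1 //.
move/(subsetP (calE_chain _ i_range)); rewrite mem_calE_setU1 // => /eqP->.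
by rewrite subrr.
Qed.

Lemma alt_sum_ge0 X : 0 <= alt_sum m r X.
Proof.
case: m r_flag => [|n] flag; first by rewrite /alt_sum big_geq.
have /andP[] // : 0 <= altsum (fun i => (r i X)%:Z) n.+1 <= (r 1%N X)%:Z.
by apply: altsum_ge0_le_head => // i i_range; rewrite lez_nat flag.
Qed.

Lemma alt_sum_set0 : alt_sum m r set0 = 0.
Proof.
rewrite /alt_sum big_nat big1 // => i /r_demi[-> _].
by rewrite mulr0.
Qed.

Lemma alt_sum_incr X x : 0 <= alt_sum m r (x |: X) - alt_sum m r X <= 1.
Proof.
have -> : alt_sum m r (x |: X) - alt_sum m r X = altsum (rank_incr X x) m.
  by rewrite /alt_sum -sumrB; apply: eq_bigr => i _; rewrite -mulrBr.
case: m rank_incr_ge0_le1 rank_incr_nonincr => [|n] incr_bounds incr_nonincr.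
  by rewrite altsum0 lexx ler01.
have /andP[_ incr1_le1] := incr_bounds X x 1%N isT.
have /andP[sum_ge0 sum_le] :
    0 <= altsum (rank_incr X x) n.+1 <= rank_incr X x 1%N.
  apply: altsum_ge0_le_head => [i|]; first exact: incr_nonincr.
  by have /andP[] := incr_bounds X x n.+1 (leqnn _).
by rewrite sum_ge0 (le_trans sum_le incr1_le1).
Qed.

End Flag.

Theorem mainTheorem2 (E : finType) (m : nat) (r : nat -> {set E} -> nat) :
  (forall i, (1 <= i <= m)%N -> is_demi_matroid (r i)) ->
  (forall i (X : {set E}), (1 <= i < m)%N -> (r i.+1 X <= r i X)%N) ->
  (forall i, (1 <= i < m)%N -> calE (r i) \subset calE (r i.+1)) ->
  is_demi_matroid_int (alt_sum m r).
Proof.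
move=> r_demi r_flag calE_chain; apply: is_demi_matroid_int_of_incr.
- exact: alt_sum_ge0.
- exact: alt_sum_set0.
- exact: alt_sum_incr.
Qed.
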